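(* Let $H$ be a real symmetric positive definite $d\times d$ matrix and $L$ a real $d\times d$ matrix with $L^TH+HL=0$. Consider an $s$-stage explicit Runge–Kutta method applied to $\frac{d}{dt}u=Lu$, $u_{n+1}=G_s u_n$ with $G_s=\sum_{k=0}^s a_k(hL)^k$, $a_0=1$, $a_s\ne0$, $h>0$. Suppose (i) $b_k=0$ for $1\le k\le s-2$, (ii) $b_{s-1}<0$, and (iii) $h\|L\|\le\sqrt{-b_{s-1}/b_s}$. Then the method is strongly stable, i.e. $\|u_{n+1}\|_H\le\|u_n\|_H$ for every $u_n$.
   Context: For $0\le k\le s$, $b_k=\sum_{i=\max(0,2k-s)}^{\min(2k,s)}(-1)^{k+i}a_i a_{2k-i}$ (in particular $b_s=a_s^2$). Here $\|x\|_H=\sqrt{\langle x,Hx\rangle}$ and $\|L\|=\sup_{\|v\|_H=1}\|Lv\|_H$. *)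

From HB Require Import structures.
From mathcomp Require Import all_boot all_order all_algebra.
From mathcomp Require Import classical_sets reals.
Set Implicit Arguments. Unset Strict Implicit. Unset Printing Implicit Defensive.
Import Order.TTheory GRing.Theory Num.Theory.
Local Open Scope ring_scope.
Local Open Scope classical_set_scope.

Definition mxpow {R : realType} {d : nat} (A : 'M[R]_d) (k : nat) : 'M[R]_d :=
  iter k (mulmx A) 1%:M.

Definition spd {R : realType} {d : nat} (H : 'M[R]_d) : Prop :=
  H^T = H /\ forall x : 'cV[R]_d, x != 0 -> 0 < (x^T *m H *m x) 0 0.

Definition Hnorm {R : realType} {d : nat} (H : 'M[R]_d) (x : 'cV[R]_d) : R :=
  Num.sqrt ((x^T *m H *m x) 0 0).

Definition Hopnorm {R : realType} {d : nat} (H L : 'M[R]_d) : R :=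
  sup [set Hnorm H (L *m v) | v in [set v : 'cV[R]_d | Hnorm H v = 1]].

Definition RKop {R : realType} {d : nat} (a : nat -> R) (s : nat) (h : R)
  (L : 'M[R]_d) : 'M[R]_d :=
  \sum_(k < s.+1) a k *: mxpow (h *: L) k.

Definition bcoef {R : realType} (a : nat -> R) (s k : nat) : R :=
  \sum_(maxn 0 (2 * k - s) <= i < (minn (2 * k) s).+1)
     (-1) ^+ (k + i) * a i * a (2 * k - i)%N.

(* Write M = hL and p = a_0 + a_1 X + ... + a_s X^s, so that G_s = p(M). Skew-adjointness of M for
   <x, y>_H gives <M^i u, M^j u>_H = (-1)^i <u, M^(i+j) u>_H: odd powers contribute nothing and
   M^(2k) contributes (-1)^k ||M^k u||_H^2. Since ||p(M) u||_H^2 = <u, p(-M) p(M) u>_H, collecting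
   the coefficients of p(-X) p(X) yields the energy identity
     ||G_s u||_H^2 = sum_k b_k ||M^k u||_H^2.
   Under (i) only k = 0, s - 1, s survive, with b_0 = a_0^2 = 1 and b_s = a_s^2 > 0, and
   ||M^s u||_H <= h ||L|| ||M^(s-1) u||_H together with (iii) makes
   b_(s-1) ||M^(s-1) u||_H^2 + b_s ||M^s u||_H^2 <= 0. The operator norm is finite because a
   positive definite H controls every coordinate of H u by Cauchy-Schwarz. *)

From HB Require Import structures.
From mathcomp Require Import all_boot all_order all_algebra.
From mathcomp Require Import classical_sets reals.
From mathcomp Require Import zify lra.
Set Implicit Arguments. Unset Strict Implicit. Unset Printing Implicit Defensive.
Import Order.TTheory GRing.Theory Num.Theory.
Local Open Scope ring_scope.

Section BilinearForm.
Variables (R : comPzRingType) (d : nat) (H : 'M[R]_d).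

Definition Hdot (x y : 'cV[R]_d) : R := (x^T *m H *m y) 0 0.

Lemma HdotDl x y z : Hdot (x + y) z = Hdot x z + Hdot y z.
Proof. by rewrite /Hdot linearD /= !mulmxDl mxE. Qed.

Lemma HdotDr x y z : Hdot z (x + y) = Hdot z x + Hdot z y.
Proof. by rewrite /Hdot !mulmxDr mxE. Qed.

Lemma HdotZl c x z : Hdot (c *: x) z = c * Hdot x z.
Proof. by rewrite /Hdot linearZ /= -!scalemxAl mxE. Qed.

Lemma HdotZr c x z : Hdot z (c *: x) = c * Hdot z x.
Proof. by rewrite /Hdot -!scalemxAr mxE. Qed.

Lemma Hdot0l v : Hdot 0 v = 0.
Proof. by rewrite /Hdot trmx0 !mul0mx mxE. Qed.

Lemma Hdot_sumr x m (F : 'I_m -> 'cV[R]_d) :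
  Hdot x (\sum_(i < m) F i) = \sum_(i < m) Hdot x (F i).
Proof. by rewrite /Hdot mulmx_sumr summxE. Qed.

Lemma HdotC x y : H^T = H -> Hdot x y = Hdot y x.
Proof.
move=> HT; rewrite /Hdot.
have -> : (x^T *m H *m y) 0 0 = (x^T *m H *m y)^T 0 0 by rewrite [RHS]mxE.
by rewrite !trmx_mul trmxK HT mulmxA.
Qed.

Lemma Hdot_delta_mx i v : Hdot (delta_mx i 0) v = (H *m v) i 0.
Proof.
rewrite /Hdot trmx_delta -mulmxA (mxE _ _ 0 0) (bigD1 i) //= big1 ?addr0.
  by rewrite [delta_mx _ _ _ _]mxE !eqxx mul1r.
by move=> j ji; rewrite [delta_mx _ _ _ _]mxE eqxx (negbTE ji) mul0r.
Qed.

End BilinearForm.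

Lemma horner_mxZX (R : comNzRingType) n (M : 'M[R]_n.+1) c i :
  horner_mx M (c *: 'X^i) = c *: M ^+ i.
Proof. by rewrite linearZ rmorphXn /= horner_mx_X. Qed.

Section SkewAdjoint.
Variables (R : comNzRingType) (n : nat) (H M : 'M[R]_n.+1).
Hypothesis M_skew : M^T *m H = - (H *m M).

Lemma trmx_exp_skew k : (M ^+ k)^T *m H = (-1) ^+ k *: (H *m M ^+ k).
Proof.
elim: k => [|k IH]; first by rewrite !expr0 trmx1 mul1mx mulmx1 scale1r.
rewrite exprSr -mulmxE trmx_mul -mulmxA IH -scalemxAr.
rewrite [M^T *m (H *m _)]mulmxA M_skew mulNmx.
by rewrite -!mulmxA mulmxE -exprS -exprSr [(-1) ^+ k.+1]exprS mulN1r scaleNr scalerN.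
Qed.

Lemma Hdot_exp_skew u i j :
  Hdot H (M ^+ i *m u) (M ^+ j *m u) = (-1) ^+ i * Hdot H u (M ^+ (i + j) *m u).
Proof.
rewrite /Hdot trmx_mul -!mulmxA [(M ^+ i)^T *m _]mulmxA trmx_exp_skew.
by rewrite -scalemxAl -scalemxAr mxE exprD -mulmxE -!mulmxA.
Qed.

Lemma trmx_horner_skew N (c : nat -> R) :
  (horner_mx M (\poly_(i < N) c i))^T *m H =
  H *m horner_mx M (\poly_(i < N) ((-1) ^+ i * c i)).
Proof.
rewrite !poly_def !rmorph_sum raddf_sum mulmx_suml mulmx_sumr.
apply: eq_bigr => i _ /=; rewrite !horner_mxZX linearZ /= -scalemxAl trmx_exp_skew.
by rewrite scalerA mulrC -scalemxAr.
Qed.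

Lemma Hdot_horner_skew N (c : nat -> R) u :
  let p := \poly_(i < N) c i in
  Hdot H (horner_mx M p *m u) (horner_mx M p *m u) =
  Hdot H u (horner_mx M (\poly_(i < N) ((-1) ^+ i * c i) * p) *m u).
Proof.
rewrite /Hdot trmx_mul -!mulmxA [_^T *m (H *m _)]mulmxA trmx_horner_skew.
by rewrite rmorphM /= -mulmxE !mulmxA.
Qed.

End SkewAdjoint.

Lemma sum_even_ord (V : nmodType) s (f : nat -> V) :
  (forall k, f (2 * k).+1 = 0) ->
  \sum_(m < (2 * s).+1) f m = \sum_(k < s.+1) f (2 * k)%N.
Proof.
move=> f_odd; elim: s => [|s IH]; first by rewrite !big_ord1.
rewrite mulnS big_ord_recr big_ord_recr /= IH f_odd addr0.
by rewrite [RHS]big_ord_recr /= mulnS.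
Qed.

Lemma poly_coef_wide (R : nzSemiRingType) N (p : {poly R}) :
  (size p <= N)%N -> \poly_(i < N) p`_i = p.
Proof.
move=> sz_p; apply/polyP => j; rewrite coef_poly; case: ltnP => // le_Nj.
by rewrite nth_default // (leq_trans sz_p le_Nj).
Qed.

Section SymmetricSkew.
Variables (R : numFieldType) (n : nat) (H M : 'M[R]_n.+1).
Hypotheses (H_sym : H^T = H) (M_skew : M^T *m H = - (H *m M)).

Lemma Hdot_exp_odd u k : Hdot H u (M ^+ (2 * k).+1 *m u) = 0.
Proof.
have := Hdot_exp_skew M_skew u k.+1 k; rewrite HdotC // Hdot_exp_skew //.
rewrite addSn addnS addnn -mul2n [(-1) ^+ k.+1]exprS mulN1r mulNr => /eqP.
by rewrite -addr_eq0 -mulr2n mulrn_eq0 /= mulf_eq0 signr_eq0 => /eqP.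
Qed.

Lemma Hdot_exp_even u k :
  Hdot H u (M ^+ (2 * k) *m u) = (-1) ^+ k * Hdot H (M ^+ k *m u) (M ^+ k *m u).
Proof.
rewrite Hdot_exp_skew // mulrA -exprD addnn -mul2n.
by rewrite [(-1) ^+ _]exprM sqrrN !expr1n mul1r.
Qed.

Lemma Hdot_horner_even (q : {poly R}) s u : (size q <= (2 * s).+1)%N ->
  Hdot H u (horner_mx M q *m u) =
  \sum_(k < s.+1) (-1) ^+ k * q`_(2 * k) * Hdot H (M ^+ k *m u) (M ^+ k *m u).
Proof.
move=> sz_q; rewrite -[in LHS](poly_coef_wide sz_q) poly_def rmorph_sum mulmx_suml Hdot_sumr.
under eq_bigr => m _ do rewrite /= horner_mxZX -scalemxAl HdotZr.
rewrite (@sum_even_ord _ s (fun m => q`_m * Hdot H u (M ^+ m *m u))); last first.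
  by move=> k; rewrite Hdot_exp_odd mulr0.
by apply: eq_bigr => k _; rewrite Hdot_exp_even mulrCA mulrA.
Qed.

End SymmetricSkew.

Section RungeKutta.
Variables (R : realType) (a : nat -> R) (s : nat).

Lemma bcoef0 : bcoef a s 0 = a 0%N ^+ 2.
Proof. by rewrite /bcoef muln0 sub0n max0n min0n big_nat1 expr0 mul1r expr2. Qed.

Lemma bcoef_last : bcoef a s s = a s ^+ 2.
Proof.
rewrite /bcoef max0n (_ : (2 * s - s = s)%N); last by lia.
rewrite (_ : minn (2 * s) s = s); last by lia.
rewrite big_nat1 (_ : (2 * s - s = s)%N); last by lia.
by rewrite -signr_odd addnn odd_double expr0 mul1r expr2.
Qed.

Lemma coef_bcoef k : (k <= s)%N ->
  (-1) ^+ k * (\poly_(i < s.+1) ((-1) ^+ i * a i) * \poly_(i < s.+1) a i)`_(2 * k)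
  = bcoef a s k.
Proof.
move=> le_ks; rewrite coefM mulr_sumr /bcoef max0n.
pose F i := (-1) ^+ k * ((\poly_(j < s.+1) ((-1) ^+ j * a j))`_i *
                         (\poly_(j < s.+1) a j)`_(2 * k - i)).
rewrite (eq_bigr (fun i : 'I_(2 * k).+1 => F i)) // -(big_mkord xpredT F) /F.
rewrite (@big_cat_nat _ _ _ (2 * k - s)) //=; last by lia.
rewrite (@big_cat_nat _ _ _ (minn (2 * k) s).+1 (2 * k - s)) //=; try lia.
rewrite big1_seq ?add0r => [|i /andP[_]]; last first.
  rewrite mem_index_iota => /andP[_ ?].
  by rewrite !coef_poly (_ : (2 * k - i < s.+1)%N = false) ?mulr0 //; lia.
rewrite [X in _ + X]big1_seq ?addr0 => [|i /andP[_]]; last first.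
  rewrite mem_index_iota => /andP[? ?].
  by rewrite !coef_poly (_ : (i < s.+1)%N = false) ?mul0r ?mulr0 //; lia.
rewrite big_nat_cond [RHS]big_nat_cond; apply: eq_bigr => i /andP[/andP[? ?] _].
by rewrite !coef_poly (_ : (i < s.+1)%N) 1?(_ : (2 * k - i < s.+1)%N) ?exprD ?mulrA //; lia.
Qed.

Lemma Hdot_horner_bcoef n (H M : 'M[R]_n.+1) u :
  H^T = H -> M^T *m H = - (H *m M) ->
  let p := \poly_(i < s.+1) a i in
  Hdot H (horner_mx M p *m u) (horner_mx M p *m u) =
  \sum_(k < s.+1) bcoef a s k * Hdot H (M ^+ k *m u) (M ^+ k *m u).
Proof.
move=> H_sym M_skew p.
rewrite Hdot_horner_skew // (Hdot_horner_even H_sym M_skew _ (s := s)).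
  by apply: eq_bigr => k _; rewrite coef_bcoef // -ltnS.
apply: (leq_trans (size_polyMleq _ _)).
have := size_poly s.+1 (fun i => (-1) ^+ i * a i); have := size_poly s.+1 a.
by move: (size _) (size _) => ? ?; lia.
Qed.

End RungeKutta.

Lemma mxpowE (R : realType) d (A : 'M[R]_d) k : mxpow A k = A ^+ k.
Proof. by elim: k => [|k IH]; rewrite ?expr0 // exprS /mxpow /= -/(mxpow A k) IH. Qed.

Lemma RKop_horner (R : realType) n a s h (L : 'M[R]_n.+1) :
  RKop a s h L = horner_mx (h *: L) (\poly_(i < s.+1) a i).
Proof.
by rewrite /RKop poly_def rmorph_sum; apply: eq_bigr => i _ /=; rewrite mxpowE horner_mxZX.
Qed.

Lemma quad_form_le_sum_sqr (R : realFieldType) d (N : 'M[R]_d) (w : 'cV[R]_d) :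
  (w^T *m N *m w) 0 0 <= (\sum_j \sum_i `|N i j|) * \sum_k w k 0 ^+ 2.
Proof.
set S := \sum_k w k 0 ^+ 2.
have w_sqr_le i : w i 0 ^+ 2 <= S.
  by rewrite /S (bigD1 i) //= lerDl sumr_ge0 // => k _; rewrite sqr_ge0.
rewrite mxE mulr_suml; apply: ler_sum => j _.
rewrite mxE !mulr_suml; apply: ler_sum => i _; rewrite mxE.
have nrm_le : `|w i 0| * `|w j 0| <= S.
  have := w_sqr_le i; have := w_sqr_le j.
  rewrite -(real_normK (num_real (w i 0))) -(real_normK (num_real (w j 0))).
  have := sqr_ge0 (`|w i 0| - `|w j 0|); nra.
apply: (le_trans (ler_norm _)); rewrite !normrM.
by have := normr_ge0 (N i j); nra.
Qed.

Lemma HnormE (R : realType) d (H : 'M[R]_d) x : Hnorm H x = Num.sqrt (Hdot H x x).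
Proof. by []. Qed.

Lemma HnormZ (R : realType) d (H : 'M[R]_d) c x : Hnorm H (c *: x) = `|c| * Hnorm H x.
Proof. by rewrite !HnormE HdotZl HdotZr mulrA -expr2 sqrtrM ?sqr_ge0 // sqrtr_sqr. Qed.

Section PositiveDefinite.
Variables (R : realType) (d : nat) (H : 'M[R]_d).
Hypothesis H_spd : spd H.

Lemma Hdot_self_ge0 x : 0 <= Hdot H x x.
Proof.
have [->|x_neq0] := eqVneq x 0; first by rewrite Hdot0l.
by case: H_spd => _ /(_ x x_neq0) /ltW.
Qed.

Lemma Hdot_CauchySchwarz x y : Hdot H x y ^+ 2 <= Hdot H x x * Hdot H y y.
Proof.
have [->|x_neq0] := eqVneq x 0; first by rewrite !Hdot0l expr0n mul0r.
have xx_gt0 : 0 < Hdot H x x by case: H_spd => _ /(_ x x_neq0).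
set c := Hdot H x y / Hdot H x x.
have c_def : c * Hdot H x x = Hdot H x y by rewrite mulfVK // gt_eqF.
have := Hdot_self_ge0 (y + (- c) *: x).
rewrite HdotDl !HdotDr !HdotZl !HdotZr (HdotC y x); last by case: H_spd.
move=> ge0; have cB_le : c * Hdot H x y <= Hdot H y y by nra.
by rewrite expr2 -{1}c_def mulrAC mulrC ler_wpM2l // ltW.
Qed.

Lemma spd_unitmx : H \in unitmx.
Proof.
case: H_spd => _ H_pos; rewrite unitmxE unitfE; apply/negP => /det0P[v v_neq0 vH0].
have : v^T != 0 by rewrite -(inj_eq (@trmx_inj _ _ _)) trmx0 trmxK.
by move=> /H_pos; rewrite trmxK vH0 mul0mx mxE ltxx.
Qed.

Lemma sum_sqr_mulmx_le v :
  \sum_i (H *m v) i 0 ^+ 2 <= (\sum_i Hdot H (delta_mx i 0) (delta_mx i 0)) * Hdot H v v.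
Proof.
rewrite mulr_suml; apply: ler_sum => i _.
by rewrite -Hdot_delta_mx Hdot_CauchySchwarz.
Qed.

Lemma Hdot_mulmx_bounded (L : 'M[R]_d) :
  exists K, forall v, Hdot H (L *m v) (L *m v) <= K * Hdot H v v.
Proof.
set N := (L *m invmx H)^T *m H *m (L *m invmx H).
exists ((\sum_j \sum_i `|N i j|) * \sum_i Hdot H (delta_mx i 0) (delta_mx i 0)) => v.
have -> : Hdot H (L *m v) (L *m v) = ((H *m v)^T *m N *m (H *m v)) 0 0.
  have -> : L *m v = L *m invmx H *m (H *m v) by rewrite -mulmxA mulKmx ?spd_unitmx.
  by rewrite /Hdot /N trmx_mul !mulmxA.
rewrite -mulrA; apply: (le_trans (quad_form_le_sum_sqr _ _)).
by rewrite ler_wpM2l ?sum_sqr_mulmx_le ?sumr_ge0 // => j _; rewrite sumr_ge0.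
Qed.

Lemma Hnorm_mulmx_le (L : 'M[R]_d) v : Hnorm H (L *m v) <= Hopnorm H L * Hnorm H v.
Proof.
have [K L_bnd] := Hdot_mulmx_bounded L.
have ub : has_ubound [set Hnorm H (L *m v) | v in [set v | Hnorm H v = 1]].
  exists (Num.sqrt K) => _ [w /= w1 <-]; rewrite ler_wsqrtr //.
  have w_1 : Hdot H w w = 1 by rewrite -(sqr_sqrtr (Hdot_self_ge0 w)) -HnormE w1 expr1n.
  by rewrite -[K]mulr1 -w_1; exact: L_bnd.
have [->|v_neq0] := eqVneq v 0; first by rewrite mulmx0 HnormE Hdot0l sqrtr0 mulr0.
have v_gt0 : 0 < Hnorm H v by rewrite sqrtr_gt0; case: H_spd => _ /(_ v v_neq0).
have : Hnorm H (L *m ((Hnorm H v)^-1 *: v)) <= Hopnorm H L.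
  apply: ub_le_sup => //; exists ((Hnorm H v)^-1 *: v) => //=.
  by rewrite HnormZ gtr0_norm ?invr_gt0 // mulVf // gt_eqF.
by rewrite -scalemxAr HnormZ gtr0_norm ?invr_gt0 // ler_pdivrMl // mulrC.
Qed.

End PositiveDefinite.

Lemma weighted_sum_le0 (R : rcfType) (b1 b2 q1 q2 : R) :
  b1 < 0 -> 0 < b2 -> 0 <= q1 -> 0 <= q2 ->
  Num.sqrt q2 <= Num.sqrt (- b1 / b2) * Num.sqrt q1 -> b1 * q1 + b2 * q2 <= 0.
Proof.
move=> b1_lt0 b2_gt0 q1_ge0 q2_ge0.
have c_ge0 : 0 <= - b1 / b2 by apply: divr_ge0; lra.
rewrite -sqrtrM // ler_sqrt => [q2_le|]; last exact: mulr_ge0.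
have : b2 * q2 <= b2 * (- b1 / b2 * q1) by rewrite ler_wpM2l // ltW.
by rewrite mulrA mulrCA divff ?gt_eqF // mulr1; lra.
Qed.

Theorem lemma1 (R : realType) (d : nat) (H L : 'M[R]_d) (a : nat -> R)
  (s : nat) (h : R) :
  spd H ->
  L^T *m H + H *m L = 0 ->
  (0 < s)%N ->
  a 0%N = 1 ->
  a s != 0 ->
  0 < h ->
  (forall k : nat, (1 <= k)%N -> (k <= s - 2)%N -> bcoef a s k = 0) ->
  bcoef a s (s - 1) < 0 ->
  h * Hopnorm H L <= Num.sqrt (- bcoef a s (s - 1) / bcoef a s s) ->
  forall u : 'cV[R]_d, Hnorm H (RKop a s h L *m u) <= Hnorm H u.
Proof.
move=> H_spd L_skew s_gt0 a0 as_neq0 h_gt0 b_mid b_pen h_le u.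
case: d H L H_spd L_skew h_le u => [|n] H L H_spd L_skew h_le u.
  by rewrite /Hnorm !mxE !big_ord0.
have H_sym : H^T = H by case: H_spd.
have M_skew : (h *: L)^T *m H = - (H *m (h *: L)).
  move/eqP: L_skew; rewrite addr_eq0 => /eqP L_skew.
  by rewrite linearZ /= -scalemxAl L_skew -scalemxAr scalerN.
have b0 : bcoef a s 0 = 1 by rewrite bcoef0 a0 expr1n.
have [t s_def] : exists t, s = t.+2.
  case: s s_gt0 b_pen b0 {b_mid h_le as_neq0} => [|[|t]] // _; last by exists t.
  by rewrite subnn => b_pen b0; rewrite b0 ltr10 in b_pen.
subst s; rewrite (_ : (t.+2 - 1 = t.+1)%N) // in b_pen h_le.
rewrite !HnormE RKop_horner Hdot_horner_bcoef // ler_sqrt ?Hdot_self_ge0 //.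
rewrite big_ord_recr big_ord_recr /= big_ord_recl /= big1 => [|k _]; last first.
  by rewrite b_mid ?mul0r // /bump add1n subn2 /=.
rewrite b0 expr0 mul1mx mul1r addr0 -addrA gerDl.
rewrite [(h *: L) ^+ t.+2]exprS -mulmxE -mulmxA; set v := _ ^+ t.+1 *m u.
apply: weighted_sum_le0; rewrite ?Hdot_self_ge0 //.
  by rewrite bcoef_last lt_def sqrf_eq0 as_neq0 sqr_ge0.
rewrite -!HnormE -scalemxAl HnormZ gtr0_norm //.
apply: le_trans (ler_wpM2l (ltW h_gt0) (Hnorm_mulmx_le H_spd L v)) _.
by rewrite mulrA ler_wpM2r ?sqrtr_ge0.
Qed.
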